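(* Let $f=Mh\in\mathbb C[U_1,\ldots,U_n]$, where $M$ is a monomial $U_1^{\alpha_1}\cdots U_n^{\alpha_n}$ and $h\in\mathbb C[U_1,\ldots,U_n]$ has nonzero constant term. Then there exists $m\ge1$ with $\mathcal L(f^m)\neq0$. (Equivalently: if $f$ is of this form with $\mathcal L(f^m)=0$ for all $m\ge 1$, then $f=0$, which is impossible; so no such $f$ exists.)
   Context: $\mathcal L:\mathbb C[U_1,\ldots,U_n]\to\mathbb C$ is the $\mathbb C$-linear map defined on monomials by $\mathcal L(U_1^{\ell_1}\cdots U_n^{\ell_n})=\ell_1!\cdots\ell_n!$. *)

From HB Require Import structures.
From mathcomp Require Import all_boot all_order all_algebra.
Set Implicit Arguments. Unset Strict Implicit. Unset Printing Implicit Defensive.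
Import Order.TTheory GRing.Theory Num.Theory.
Local Open Scope ring_scope.

(* Multivariate polynomials in U_1..U_n over a coefficient ring R, represented
   as formal finite sums  sum_{(c,e) in p} c * U^e  (a list of terms).
   The polynomial ring is the quotient of such formal sums; all notions
   used below (product, power, constant term, L) are compatible with
   that quotient, so this representation is faithful. *)

Definition expo (n : nat) := {ffun 'I_n -> nat}.

Definition fpoly (R : Type) (n : nat) := seq (R * expo n).

Definition expo0 (n : nat) : expo n := [ffun => 0%N].
Definition expoD (n : nat) (a b : expo n) : expo n := [ffun i => (a i + b i)%N].

Definition fmul (R : nzRingType) (n : nat) (p q : fpoly R n) : fpoly R n :=
  [seq (a.1 * b.1, expoD a.2 b.2) | a <- p, b <- q].

Definition fone (R : nzRingType) (n : nat) : fpoly R n := [:: (1, expo0 n)].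

Definition fexp (R : nzRingType) (n : nat) (p : fpoly R n) (m : nat) : fpoly R n :=
  iter m (fmul p) (fone R n).

Definition monomial_mul (R : nzRingType) (n : nat) (alpha : expo n) (p : fpoly R n)
  : fpoly R n := [seq (t.1, expoD alpha t.2) | t <- p].

Definition const_coef (R : nzRingType) (n : nat) (p : fpoly R n) : R :=
  \sum_(t <- p | t.2 == expo0 n) t.1.

(* the linear map L : U^l |-> l_1! ... l_n! *)
Definition Lmono (n : nat) (e : expo n) : nat := (\prod_(i < n) (e i)`!)%N.

Definition Lfun (R : nzRingType) (n : nat) (p : fpoly R n) : R :=
  \sum_(t <- p) t.1 * (Lmono t.2)%:R.

(* For a prime p, the Frobenius congruence (x + y)^p = x^p + y^p mod p in the
   subring G generated by the coefficients of h gives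
   L(f^p) = L(M^p) (c^p + p z) with z in G, where c is the constant term of h:
   L(U^(p(alpha + e))) is a multiple of p L(U^(p alpha)) whenever e <> 0.
   So it suffices to find p such that c is not nilpotent in G / pG.  Over Z
   any prime above |c| works, and the property descends along the adjunction
   of each generator t to a subring S: for a nonzero d in S[t], some nonzero d'
   in S is nilpotent mod p whenever d is -- a leading coefficient of d if t is
   transcendental over S, and lead(P) times an element U(t) d of S, with P a
   minimal polynomial of t over S, if t is algebraic. *)

From Stdlib Require Import Classical.
From HB Require Import structures.
From mathcomp Require Import all_boot all_order all_algebra zify ring.
From mathcomp Require Import mpoly.
Import Order.TTheory GRing.Theory Num.Theory.
Local Open Scope ring_scope.
Set Implicit Arguments. Unset Strict Implicit. Unset Printing Implicit Defensive.

Section Subring.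
Variable R : comNzRingType.

Record is_subring (S : R -> Prop) : Prop := IsSubring {
  subring0 : S 0;
  subring1 : S 1;
  subringD : forall x y, S x -> S y -> S (x + y);
  subringN : forall x, S x -> S (- x);
  subringM : forall x y, S x -> S y -> S (x * y) }.

Variable S : R -> Prop.
Hypothesis subS : is_subring S.

Lemma subring_sum I r (P : pred I) F : (forall i, P i -> S (F i)) ->
  S (\sum_(i <- r | P i) F i).
Proof. by move=> SF; apply: big_ind => //; [exact: subring0 | exact: subringD]. Qed.

Lemma subringMn x k : S x -> S (x *+ k).
Proof.
move=> Sx; elim: k => [|k IH]; first by rewrite mulr0n; exact: subring0.
by rewrite mulrS; apply: (subringD subS).
Qed.

Lemma subringX x k : S x -> S (x ^+ k).
Proof.
move=> Sx; elim: k => [|k IH]; first by rewrite expr0; exact: subring1.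
by rewrite exprS; apply: (subringM subS).
Qed.

Lemma subring_nat k : S k%:R.
Proof. exact/subringMn/(subring1 subS). Qed.

Definition poly_over (P : {poly R}) := forall i, S P`_i.

Lemma poly_overC c : S c -> poly_over c%:P.
Proof. by move=> Sc i; rewrite coefC; case: eqP => // _; exact: subring0. Qed.

Lemma poly_over0 : poly_over 0.
Proof. exact/poly_overC/(subring0 subS). Qed.

Lemma poly_over1 : poly_over 1.
Proof. exact/poly_overC/(subring1 subS). Qed.

Lemma poly_overXn k : poly_over 'X^k.
Proof.
by move=> i; rewrite coefXn; case: eqP => _; [exact: subring1 | exact: subring0].
Qed.

Lemma poly_overX : poly_over 'X.
Proof. by rewrite -[X in poly_over X]expr1; apply: poly_overXn. Qed.

Lemma poly_overD P Q : poly_over P -> poly_over Q -> poly_over (P + Q).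
Proof. by move=> SP SQ i; rewrite coefD; apply: (subringD subS). Qed.

Lemma poly_overN P : poly_over P -> poly_over (- P).
Proof. by move=> SP i; rewrite coefN; apply: (subringN subS). Qed.

Lemma poly_overB P Q : poly_over P -> poly_over Q -> poly_over (P - Q).
Proof. by move=> SP SQ; apply/poly_overD/poly_overN. Qed.

Lemma poly_overM P Q : poly_over P -> poly_over Q -> poly_over (P * Q).
Proof. by move=> SP SQ i; rewrite coefM; apply: subring_sum => j _; apply: (subringM subS). Qed.

Lemma poly_overZ c P : S c -> poly_over P -> poly_over (c *: P).
Proof. by move=> Sc SP i; rewrite coefZ; apply: (subringM subS). Qed.

Lemma poly_over_exp P k : poly_over P -> poly_over (P ^+ k).
Proof.
move=> SP; elim: k => [|k IH]; first exact: poly_over1.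
by rewrite exprS; apply: poly_overM.
Qed.

Definition adjoin t x := exists2 P, poly_over P & x = P.[t].

Lemma is_subring_adjoin t : is_subring (adjoin t).
Proof.
split.
- by exists 0; [exact: poly_over0 | rewrite horner0].
- by exists 1; [exact: poly_over1 | rewrite hornerC].
- move=> _ _ [P SP ->] [Q SQ ->].
  by exists (P + Q); [exact: poly_overD | rewrite hornerD].
- by move=> _ [P SP ->]; exists (- P); [exact: poly_overN | rewrite hornerN].
- move=> _ _ [P SP ->] [Q SQ ->].
  by exists (P * Q); [exact: poly_overM | rewrite hornerM].
Qed.

Lemma adjoin_subring x t : S x -> adjoin t x.
Proof. by move=> Sx; exists x%:P; [exact: poly_overC | rewrite hornerC]. Qed.

Lemma adjoin_root t : adjoin t t.
Proof. by exists 'X; [exact: poly_overX | rewrite hornerX]. Qed.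

End Subring.

Section PseudoDivision.
Variables (R : comNzRingType) (S : R -> Prop).
Hypothesis subS : is_subring S.

Lemma size_pdiv_step (A B : {poly R}) : B != 0 -> (size B <= size A)%N ->
  (size (lead_coef B *: A - (lead_coef A *: 'X^(size A - size B)) * B)%R < size A)%N.
Proof.
rewrite -size_poly_gt0 => sB leBA; have sA : (0 < size A)%N by apply: leq_trans leBA.
apply: (@leq_ltn_trans (size A).-1); last by rewrite prednK.
apply/leq_sizeP => i lei; rewrite coefB coefZ -scalerAl coefZ coefXnM.
have -> : (i < size A - size B)%N = false by apply/negbTE; rewrite -leqNgt; lia.
case: (ltngtP i (size A).-1) => [lti | gti | ->].
- by move: lei; rewrite leqNgt lti.
- rewrite nth_default; last by rewrite -(prednK sA).
  by rewrite (@nth_default _ _ B) ?mulr0 ?subrr //; lia.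
- have -> : ((size A).-1 - (size A - size B))%N = (size B).-1 by lia.
  by rewrite -!lead_coefE mulrC subrr.
Qed.

Lemma poly_over_pdiv B A : poly_over S B -> B != 0 -> poly_over S A ->
  exists j M Q, [/\ poly_over S M, poly_over S Q, (size Q < size B)%N &
     lead_coef B ^+ j *: A = M * B + Q].
Proof.
move=> SB B0; elim: (size A).+1 {-2}A (ltnSn (size A)) => // N IH {}A sAN SA.
have [ltAB | leBA] := ltnP (size A) (size B).
  exists 0%N, 0, A; split => //; first exact: poly_over0.
  by rewrite expr0 scale1r mul0r add0r.
set k := (size A - size B)%N.
set A' := lead_coef B *: A - (lead_coef A *: 'X^k) * B.
have SA' : poly_over S A'.
  apply: poly_overB => //; first by apply: poly_overZ => //; exact: SB.
  by apply: poly_overM => //; apply: poly_overZ => //; [exact: SA | exact: poly_overXn].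
have [j [M [Q [SM SQ sQ E]]]] := IH A' (leq_trans (size_pdiv_step B0 leBA) sAN) SA'.
exists j.+1, (M + (lead_coef B ^+ j * lead_coef A) *: 'X^k), Q; split => //.
  apply: poly_overD => //; apply: poly_overZ => //; last exact: poly_overXn.
  by apply: (subringM subS); [apply: (subringX subS); exact: SB | exact: SA].
rewrite exprSr -scalerA.
have -> : lead_coef B *: A = A' + (lead_coef A *: 'X^k) * B by rewrite /A' subrK.
by rewrite scalerDr E mulrDl -!scalerAl scalerA addrAC.
Qed.

End PseudoDivision.

Definition nilpotent_mod (R : comNzRingType) (S : R -> Prop) (p : nat) (d : R) :=
  exists k, exists2 z, S z & d ^+ k = p%:R * z.

Definition nilpotence_descends (R : comNzRingType) (S T : R -> Prop) (d : R) :=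
  exists2 d', S d' /\ d' != 0 &
    forall p, nilpotent_mod T p d -> nilpotent_mod S p d'.

Section MinimalPolynomial.
Variables (K : idomainType) (S : K -> Prop) (t : K) (P : {poly K}).
Hypotheses (SP : poly_over S P) (P0 : P != 0) (Pt : P.[t] = 0).
Hypothesis P_min : forall Q, poly_over S Q -> Q != 0 -> Q.[t] = 0 ->
  (size P <= size Q)%N.

Lemma minpoly_root_eq0 Q : poly_over S Q -> Q.[t] = 0 -> (size Q < size P)%N ->
  Q = 0.
Proof.
move=> SQ Qt sQ; apply/eqP; apply: contraTT sQ => Q0.
by rewrite -leqNgt P_min.
Qed.

Lemma size_minpoly_gt1 : (1 < size P)%N.
Proof.
rewrite ltnNge; apply: contraTN P0 => /size1_polyC P_const.
by move: Pt; rewrite negbK P_const hornerC => ->.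
Qed.

Lemma minpoly_rem_root_neq0 (c : K) (M Q Rm : {poly K}) : c != 0 -> poly_over S M ->
  poly_over S Rm -> (1 < size Q < size P)%N -> (size Rm < size Q)%N ->
  c *: P = M * Q + Rm -> Q.[t] != 0 -> Rm.[t] != 0.
Proof.
move=> c0 SM SRm /andP [sQ1 sQP] sRm E Qt; apply/eqP => Rmt.
have Rm0 : Rm = 0 by apply: minpoly_root_eq0 => //; apply: ltn_trans sRm sQP.
have M0 : M != 0.
  apply: contra_neq P0 => M0.
  have : c *: P == 0 by rewrite E M0 Rm0 mul0r addr0.
  by rewrite scale_poly_eq0 (negbTE c0) => /eqP.
have sM : (size M < size P)%N.
  have : size (c *: P) = size (M * Q) by rewrite E Rm0 addr0.
  rewrite size_scale // size_mul //; last by rewrite -size_poly_gt0 (ltn_trans _ sQ1).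
  by move=> ->; lia.
have Mt : M.[t] = 0.
  have : M.[t] * Q.[t] = 0 by rewrite -hornerM -[M * Q]addr0 -Rm0 -E hornerZ Pt mulr0.
  by move/eqP; rewrite mulf_eq0 (negbTE Qt) orbF => /eqP.
by move: M0; rewrite (minpoly_root_eq0 SM Mt sM) eqxx.
Qed.

Hypothesis subS : is_subring S.

Lemma adjoin_dvd_subring Q : poly_over S Q -> Q.[t] != 0 ->
  exists2 U, poly_over S U & S (U.[t] * Q.[t]) /\ U.[t] * Q.[t] != 0.
Proof.
elim: (size Q).+1 {-2}Q (ltnSn (size Q)) => // N IH {}Q sQN SQ Qt.
have Q0 : Q != 0 by apply: contraNneq Qt => ->; rewrite horner0.
have [sQ1 | sQ1] := leqP (size Q) 1.
  exists 1; first exact: poly_over1.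
  by move: Qt; rewrite hornerC mul1r (size1_polyC sQ1) hornerC; split => //; exact: SQ.
have [sQP | sPQ] := ltnP (size Q) (size P).
  have [j [M [Rm [SM SRm sRm E]]]] := poly_over_pdiv subS SQ Q0 SP.
  have Rmt : Rm.[t] != 0.
    apply: minpoly_rem_root_neq0 SM SRm _ sRm E Qt; last by rewrite sQ1.
    by rewrite expf_neq0 // lead_coef_eq0.
  have [U SU [SURm URm0]] := IH Rm (leq_trans sRm sQN) SRm Rmt.
  have Rm_t : Rm.[t] = - (M.[t] * Q.[t]).
    apply/eqP; rewrite -addr_eq0 addrC -hornerM -hornerD -E hornerZ Pt mulr0 //.
  exists (- (U * M)); first by apply/(poly_overN subS)/(poly_overM subS).
  by rewrite hornerN hornerM mulNr -mulrA -mulrN -Rm_t.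
have [j [M [Rm [SM SRm sRm E]]]] := poly_over_pdiv subS SP P0 SQ.
have Rm_t : Rm.[t] = lead_coef P ^+ j * Q.[t].
  by apply/eqP; rewrite -hornerZ E hornerD hornerM Pt mulr0 add0r.
have Rmt : Rm.[t] != 0 by rewrite Rm_t mulf_neq0 // expf_neq0 // lead_coef_eq0.
have [U SU [SURm URm0]] := IH Rm (leq_trans sRm (leq_trans sPQ sQN)) SRm Rmt.
exists (lead_coef P ^+ j *: U); first by apply: (poly_overZ subS) => //; apply: (subringX subS); exact: SP.
by rewrite hornerZ -mulrA mulrCA -Rm_t.
Qed.

Lemma minpoly_eval_subring Q c : poly_over S Q -> (size Q < size P)%N -> S c ->
  Q.[t] = c -> Q`_0 = c.
Proof.
move=> SQ sQ Sc Qt.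
have : Q - c%:P = 0.
  apply: minpoly_root_eq0.
  - exact/(poly_overB subS)/(poly_overC subS).
  - by rewrite hornerD hornerN hornerC Qt subrr.
  rewrite (leq_ltn_trans (size_polyD _ _)) // gtn_max sQ size_polyN.
  exact: leq_ltn_trans (size_polyC_leq1 c) size_minpoly_gt1.
by move/(congr1 (fun q : {poly K} => q`_0))/eqP; rewrite coefB coefC coef0 subr_eq0 => /eqP.
Qed.

Lemma minpoly_descent d : adjoin S t d -> d != 0 ->
  nilpotence_descends S (adjoin S t) d.
Proof.
(* With r := U(t) D(t) in S, reducing U^k Z modulo P turns D(t)^k = p Z(t)
   into a^j r^k = p Q(t) with deg Q < deg P, hence into an identity in S. *)
move=> [D SD ->] d0; have [U SU [Sr r0]] := adjoin_dvd_subring SD d0.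
set r := U.[t] * D.[t] in Sr r0 *; set a := lead_coef P.
have Sa : S a by exact: SP.
exists (a * r); first by split; [exact: (subringM subS) | rewrite mulf_neq0 ?lead_coef_eq0].
move=> p [k [_ [Z SZ ->]] Dk].
have SUZ := poly_overM subS (poly_over_exp subS k SU) SZ.
have [j [M [Q [SM SQ sQ E]]]] := poly_over_pdiv subS SP P0 SUZ.
have Qt : (p%:R *: Q).[t] = a ^+ j * r ^+ k.
  have := congr1 (horner^~ t) E.
  rewrite /= hornerZ hornerD hornerM Pt mulr0 add0r hornerZ hornerM horner_exp => <-.
  by rewrite /r exprMn Dk; ring.
have E0 : p%:R * Q`_0 = a ^+ j * r ^+ k.
  rewrite -coefZ; apply: minpoly_eval_subring Qt.
  - exact: (poly_overZ subS (subring_nat subS p) SQ).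
  - exact: leq_ltn_trans (size_scale_leq _ _) sQ.
  - by apply: (subringM subS); apply: (subringX subS).
exists (j + k)%N, (Q`_0 * a ^+ k * r ^+ j).
  apply: (subringM subS); last exact: (subringX subS).
  by apply: (subringM subS); [exact: SQ | exact: (subringX subS)].
have -> : (a * r) ^+ (j + k) = (a ^+ j * r ^+ k) * (a ^+ k * r ^+ j).
  by rewrite exprMn !exprD; ring.
by rewrite -E0; ring.
Qed.

End MinimalPolynomial.

Lemma ex_least_nat (Pr : nat -> Prop) : (exists n, Pr n) ->
  exists n, Pr n /\ forall m, Pr m -> (n <= m)%N.
Proof.
move=> [n Pn]; apply: NNPP => no_least.
suff : forall N m, (m < N)%N -> ~ Pr m by move/(_ n.+1 n (ltnSn n)).
elim=> // N IH m ltmN Pm; apply: no_least; exists m; split => // m' Pm'.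
by rewrite leqNgt; apply/negP => ltm'm; apply: (IH m') => //; apply: leq_trans ltm'm _.
Qed.

Section Adjoin.
Variables (K : idomainType) (S : K -> Prop) (t : K).
Hypothesis subS : is_subring S.

Lemma transcendental_descent d :
  (forall Q, poly_over S Q -> Q.[t] = 0 -> Q = 0) -> adjoin S t d -> d != 0 ->
  nilpotence_descends S (adjoin S t) d.
Proof.
move=> t_transc [D SD ->] d0.
have D0 : D != 0 by apply: contraNneq d0 => ->; rewrite horner0.
exists (lead_coef D); first by split; [exact: SD | rewrite lead_coef_eq0].
move=> p [k [_ [Z SZ ->]] Dk]; exists k, (lead_coef Z); first exact: SZ.
have : D ^+ k - p%:R *: Z = 0.
  apply: t_transc; last by rewrite hornerD hornerN hornerZ horner_exp Dk subrr.
  apply: (poly_overB subS); first exact: (poly_over_exp subS k SD).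
  exact: (poly_overZ subS (subring_nat subS p) SZ).
by move/eqP; rewrite subr_eq0 => /eqP/(congr1 lead_coef); rewrite lead_coef_exp lead_coefZ.
Qed.

Lemma adjoin_descent d : adjoin S t d -> d != 0 ->
  nilpotence_descends S (adjoin S t) d.
Proof.
have [t_alg | t_transc] :=
  classic (exists P, [/\ poly_over S P, P != 0 & P.[t] = 0]).
  have [_ [[P [SP P0 Pt <-]] P_min]] := @ex_least_nat
    (fun s => exists P, [/\ poly_over S P, P != 0, P.[t] = 0 & size P = s])
    ltac:(by case: t_alg => P [SP P0 Pt]; exists (size P), P).
  apply: (minpoly_descent SP P0 Pt) => // Q SQ Q0 Qt.
  by apply: P_min; exists Q.
apply: transcendental_descent => Q SQ Qt; apply: NNPP => Q0; apply: t_transc.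
by exists Q; split => //; apply/eqP.
Qed.

End Adjoin.

Fixpoint gen_subring (R : comNzRingType) (l : seq R) : R -> Prop :=
  if l is t :: l' then adjoin (gen_subring l') t
  else fun x => exists z : int, x = z%:~R.

Lemma is_subring_gen (R : comNzRingType) (l : seq R) : is_subring (gen_subring l).
Proof.
elim: l => [|t l IH] /=; last exact: is_subring_adjoin.
split.
- by exists 0; rewrite mulr0z.
- by exists 1.
- by move=> _ _ [a ->] [b ->]; exists (a + b); rewrite intrD.
- by move=> _ [a ->]; exists (- a); rewrite intrN.
- by move=> _ _ [a ->] [b ->]; exists (a * b); rewrite intrM.
Qed.

Lemma gen_subring_mem (R : comNzRingType) (l : seq R) x : x \in l -> gen_subring l x.
Proof.
elim: l => [|t l IH] //=; rewrite inE => /predU1P [-> | /IH lx].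
  exact: (adjoin_root (is_subring_gen l)).
exact: (adjoin_subring (is_subring_gen l)).
Qed.

Lemma int_not_nilpotent_mod (K : numDomainType) (e : int) :
  e != 0 -> exists2 p, prime p & ~ nilpotent_mod (gen_subring [::]) p (e%:~R : K).
Proof.
move=> e0; have [p ltep p_pr] := prime_above `|e|%N.
exists p => // -[k [_ [z ->]] Ek].
have ek : e ^+ k = p%:Z * z.
  by apply/eqP; rewrite -(eqr_int K) intrM rmorphXn /= Ek -pmulrn.
have : (p %| `|e| ^ k)%N by rewrite -abszX ek abszM dvdn_mulr.
rewrite Euclid_dvdX // => /andP [/dvdn_leq le_pe _].
by move: ltep; rewrite ltnNge le_pe // absz_gt0.
Qed.

Lemma gen_subring_not_nilpotent_mod (K : numDomainType) (l : seq K) d :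
  gen_subring l d -> d != 0 -> exists2 p, prime p & ~ nilpotent_mod (gen_subring l) p d.
Proof.
elim: l d => [|t l IH] d ld d0.
  by case: ld d0 => e ->; rewrite intr_eq0; apply: int_not_nilpotent_mod.
have [d' [ld' d'0] descend] := adjoin_descent (is_subring_gen l) ld d0.
have [p p_pr not_nil] := IH d' ld' d'0.
by exists p => // /descend.
Qed.

Section Frobenius.
Variables (R : comNzRingType) (S : R -> Prop) (p : nat).
Hypotheses (subS : is_subring S) (p_pr : prime p).

Lemma subring_frobeniusD x y : S x -> S y ->
  exists2 z, S z & (x + y) ^+ p = x ^+ p + y ^+ p + p%:R * z.
Proof.
move=> Sx Sy; have := prime_gt1 p_pr; case: p p_pr => // p' p_pr' _.
pose C (i : 'I_p') := ('C(p'.+1, bump 0 i) %/ p'.+1)%N.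
exists (\sum_(i < p') x ^+ (p'.+1 - bump 0 i) * y ^+ bump 0 i *+ C i).
  apply: subring_sum => // i _; apply: (subringMn subS).
  by apply: (subringM subS); apply: (subringX subS).
rewrite exprDn big_ord_recl big_ord_recr /= subn0 bin0 binn !mulr1n.
have -> : bump 0 p' = p'.+1 by rewrite /bump add1n.
rewrite subnn expr0 mulr1 mul1r mulr_sumr.
suff -> : \sum_(i < p') x ^+ (p'.+1 - bump 0 i) * y ^+ bump 0 i *+ 'C(p'.+1, bump 0 i)
  = \sum_(i < p') p'.+1%:R * (x ^+ (p'.+1 - bump 0 i) * y ^+ bump 0 i *+ C i) by ring.
apply: eq_bigr => i _; rewrite mulr_natl -mulrnA /C divnK //.
by apply: prime_dvd_bin => //; rewrite /bump add1n /=; exact: ltn_ord.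
Qed.

Lemma subring_frobenius_sum (I : eqType) (r : seq I) (F : I -> R) :
  (forall i, i \in r -> S (F i)) ->
  exists2 z, S z & (\sum_(i <- r) F i) ^+ p = \sum_(i <- r) F i ^+ p + p%:R * z.
Proof.
elim: r => [|i r IH] SF.
  by exists 0; [exact: subring0 | rewrite !big_nil mulr0 addr0 expr0n gtn_eqF ?prime_gt0].
have SFr j : j \in r -> S (F j) by move=> rj; apply: SF; rewrite inE rj orbT.
have [z1 Sz1 E1] := IH SFr.
have Sr : S (\sum_(j <- r) F j) by rewrite big_seq; apply: subring_sum.
have [z2 Sz2 E2] := subring_frobeniusD (SF i (mem_head i r)) Sr.
exists (z1 + z2); first exact: (subringD subS).
by rewrite !big_cons E2 E1; ring.
Qed.

End Frobenius.

Section MpolyCoefficients.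
Variables (R : comNzRingType) (n : nat) (S : R -> Prop).
Hypothesis subS : is_subring S.

Definition mpoly_over (P : {mpoly R[n]}) := forall m, S P@_m.

Lemma is_subring_mpoly_over : is_subring mpoly_over.
Proof.
split.
- by move=> m; rewrite mcoeff0; exact: subring0.
- by move=> m; rewrite mcoeff1; apply: (subring_nat subS).
- by move=> P Q SP SQ m; rewrite mcoeffD; apply: (subringD subS).
- by move=> P SP m; rewrite mcoeffN; apply: (subringN subS).
- move=> P Q SP SQ m; rewrite mcoeffM; apply: subring_sum => // k _.
  exact: (subringM subS).
Qed.

End MpolyCoefficients.

Section LinearForm.
Variables (R : comNzRingType) (n : nat).
Implicit Types (w : 'X_{1..n} -> R) (P Q : {mpoly R[n]}).

Definition mlinform w P : R := \sum_(m <- msupp P) P@_m * w m.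

Lemma mlinformE w P s : uniq s -> {subset msupp P <= s} ->
  mlinform w P = \sum_(m <- s) P@_m * w m.
Proof.
move=> s_uniq Ps; rewrite (bigID (mem (msupp P))) /= [X in _ = _ + X]big1; last first.
  by move=> m /memN_msupp_eq0 ->; rewrite mul0r.
rewrite addr0 -big_filter; apply: perm_big; apply: uniq_perm.
- exact: msupp_uniq.
- exact: filter_uniq.
by move=> m; rewrite mem_filter; case: (boolP (m \in msupp P)) => // /Ps ->.
Qed.

Lemma mlinform0 w : mlinform w 0 = 0.
Proof. by rewrite (@mlinformE w 0 [::]) ?big_nil // => m; rewrite mcoeff_msupp mcoeff0 eqxx. Qed.

Lemma mlinformD w P Q : mlinform w (P + Q) = mlinform w P + mlinform w Q.
Proof.
have s_uniq := undup_uniq (msupp P ++ msupp Q).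
rewrite !(mlinformE w s_uniq) -?big_split /=.
- by apply: eq_bigr => m _; rewrite mcoeffD mulrDl.
- by move=> m Qm; rewrite mem_undup mem_cat Qm orbT.
- by move=> m Pm; rewrite mem_undup mem_cat Pm.
by move=> m /msuppD_le; rewrite mem_undup.
Qed.

Lemma mlinform_sum w I (r : seq I) (Pr : pred I) (F : I -> {mpoly R[n]}) :
  mlinform w (\sum_(i <- r | Pr i) F i) = \sum_(i <- r | Pr i) mlinform w (F i).
Proof. exact: (big_morph _ (mlinformD w) (mlinform0 w)). Qed.

Lemma mlinformMn w P k : mlinform w (P *+ k) = mlinform w P *+ k.
Proof. by elim: k => [|k IH]; rewrite ?mulr0n ?mlinform0 // !mulrS mlinformD IH. Qed.

Lemma mlinformZ w c P : mlinform w (c *: P) = c * mlinform w P.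
Proof.
rewrite (mlinformE w (msupp_uniq P) (@msuppZ_le _ _ c P)) mulr_sumr.
by apply: eq_bigr => m _; rewrite mcoeffZ mulrA.
Qed.

Lemma mlinformX w m : mlinform w 'X_[m] = w m.
Proof. by rewrite /mlinform msuppX big_seq1 mcoeffX eqxx mul1r. Qed.

Lemma mlinformC w c : mlinform w c%:MP = c * w 0%MM.
Proof. by rewrite -alg_mpolyC -mpolyX0 mlinformZ mlinformX. Qed.

Lemma mlinformXM w a P :
  mlinform w ('X_[a] * P) = mlinform (fun m => w (a + m)%MM) P.
Proof.
rewrite {1}(mpolyE P) mulr_sumr mlinform_sum; apply: eq_bigr => m _.
by rewrite -scalerAr -mpolyXD mlinformZ mlinformX.
Qed.

Lemma mlinform_weightM w c P : mlinform (fun m => c * w m) P = c * mlinform w P.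
Proof. by rewrite /mlinform mulr_sumr; apply: eq_bigr => m _; rewrite mulrCA. Qed.

Lemma subring_mlinform (S : R -> Prop) (w : 'X_{1..n} -> nat) P :
  is_subring S -> mpoly_over S P -> S (mlinform (fun m => (w m)%:R) P).
Proof.
move=> subS SP; apply: subring_sum => // m _.
by apply: (subringM subS); [exact: SP | exact: subring_nat].
Qed.

End LinearForm.

Section FormalSums.
Variables (R : comNzRingType) (n : nat).
Implicit Types (q r : fpoly R n) (e : expo n).

Definition mon e : 'X_{1..n} := [multinom e i | i < n].

Lemma mon_expoD e1 e2 : mon (expoD e1 e2) = (mon e1 + mon e2)%MM.
Proof. by apply/mnmP => i; rewrite mnmDE !mnmE ffunE. Qed.

Lemma mon_eq0 e : (mon e == 0%MM) = (e == expo0 n).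
Proof.
apply/eqP/eqP => [e0 | ->].
  apply/ffunP => i; have := congr1 (fun m : 'X_{1..n} => m i) e0.
  by rewrite mnmE mnm0E ffunE.
by apply/mnmP => i; rewrite mnmE mnm0E ffunE.
Qed.

Definition mpoly_of q : {mpoly R[n]} := \sum_(t <- q) t.1 *: 'X_[mon t.2].

Lemma mpoly_of_fmul q r : mpoly_of (fmul q r) = mpoly_of q * mpoly_of r.
Proof.
rewrite /mpoly_of /fmul big_allpairs_dep mulr_suml; apply: eq_bigr => a _.
rewrite mulr_sumr; apply: eq_bigr => b _ /=.
by rewrite mon_expoD mpolyXD -scalerAl -scalerAr scalerA.
Qed.

Lemma mpoly_of_fexp q m : mpoly_of (fexp q m) = mpoly_of q ^+ m.
Proof.
elim: m => [|m IH]; last by rewrite exprS -IH -mpoly_of_fmul.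
rewrite expr0 /mpoly_of big_seq1 /= scale1r -mpolyX0; congr 'X_[_].
by apply/eqP; rewrite mon_eq0.
Qed.

Lemma mpoly_of_monomial_mul e q :
  mpoly_of (monomial_mul e q) = 'X_[mon e] * mpoly_of q.
Proof.
rewrite /mpoly_of /monomial_mul big_map mulr_sumr; apply: eq_bigr => t _ /=.
by rewrite mon_expoD mpolyXD -scalerAr.
Qed.

Lemma mpoly_of_const_split q : mpoly_of q =
  (const_coef q)%:MP + \sum_(t <- q | t.2 != expo0 n) t.1 *: 'X_[mon t.2].
Proof.
rewrite /mpoly_of (bigID (fun t => t.2 == expo0 n)) /=; congr (_ + _).
rewrite /const_coef raddf_sum /=; apply: eq_bigr => t /eqP t0.
by rewrite -alg_mpolyC -mpolyX0; congr (_ *: 'X_[_]); apply/eqP; rewrite mon_eq0 t0.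
Qed.

Definition mfact (m : 'X_{1..n}) : nat := \prod_(i < n) (m i)`!.

Lemma Lfun_mpoly_of q : Lfun q = mlinform (fun m => (mfact m)%:R) (mpoly_of q).
Proof.
rewrite /Lfun mlinform_sum; apply: eq_bigr => t _.
rewrite mlinformZ mlinformX /Lmono /mfact; congr (_ * _%:R).
by apply: eq_bigr => i _; rewrite mnmE.
Qed.

Definition mffact (a m : 'X_{1..n}) : nat := \prod_(i < n) (a i + m i) ^_ (m i).

Lemma mfactD a m : mfact (a + m) = (mfact a * mffact a m)%N.
Proof.
rewrite /mfact /mffact -big_split /=; apply: eq_bigr => i _.
by rewrite mnmDE -(ffact_fact (leq_addl (a i) (m i))) addnK mulnC.
Qed.

Lemma mffact0 a : mffact a 0 = 1%N.
Proof. by rewrite /mffact big1 // => i _; rewrite mnm0E ffactn0. Qed.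

Lemma prime_dvd_mffact p a m : prime p -> m != 0%MM ->
  (p %| mffact (a *+ p) (m *+ p))%N.
Proof.
move=> p_pr m0; have [i mi0] : exists i, m i != 0%N.
  apply/existsP; apply: contraR m0 => /existsPn m_0.
  by apply/eqP/mnmP => i; rewrite mnm0E; apply/eqP/negbNE/m_0.
rewrite /mffact (bigD1 i) //= dvdn_mulr // -bin_ffact dvdn_mull //.
apply: dvdn_fact; rewrite prime_gt0 //= !mulmnE.
by rewrite leq_pmull // lt0n.
Qed.

Lemma mlinform_mfactXM a (P : {mpoly R[n]}) :
  mlinform (fun m => (mfact m)%:R) ('X_[a] * P) =
  (mfact a)%:R * mlinform (fun m => (mffact a m)%:R) P.
Proof.
rewrite mlinformXM -mlinform_weightM /mlinform.
by apply: eq_bigr => m _; rewrite mfactD natrM.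
Qed.

End FormalSums.

Section PrimePower.
Variables (R : comNzRingType) (n : nat) (h : fpoly R n) (p : nat).
Hypothesis p_pr : prime p.
Local Notation G := (gen_subring (map fst h)).

Lemma gen_subring_coef t : t \in h -> G t.1.
Proof. by move=> ht; apply/gen_subring_mem/map_f. Qed.

Lemma gen_subring_const_coef : G (const_coef h).
Proof.
rewrite /const_coef big_seq_cond; apply: subring_sum; first exact: is_subring_gen.
by move=> t /andP [ht _]; apply: gen_subring_coef.
Qed.

Lemma mpoly_of_frobenius : exists2 Z, mpoly_over G Z &
  mpoly_of h ^+ p = (const_coef h ^+ p)%:MP +
    \sum_(t <- h | t.2 != expo0 n) t.1 ^+ p *: 'X_[mon t.2 *+ p] + p%:R * Z.
Proof.
have subG := is_subring_gen (map fst h).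
have subG' := is_subring_mpoly_over n subG.
have Gc : mpoly_over G (const_coef h)%:MP_[n].
  move=> m; rewrite mcoeffC; apply: (subringM subG).
    exact: gen_subring_const_coef.
  exact: (subring_nat subG).
have GX t : t \in [seq t <- h | t.2 != expo0 n] -> mpoly_over G (t.1 *: 'X_[mon t.2]).
  rewrite mem_filter => /andP [_ ht] m; rewrite mcoeffZ mcoeffX.
  by apply: (subringM subG); [exact: gen_subring_coef | exact: (subring_nat subG)].
have [Z1 GZ1 E1] := subring_frobenius_sum subG' p_pr GX.
have GS : mpoly_over G (\sum_(t <- [seq t <- h | t.2 != expo0 n]) t.1 *: 'X_[mon t.2]).
  by rewrite big_seq; apply: subring_sum.
have [Z2 GZ2 E2] := subring_frobeniusD subG' p_pr Gc GS.
exists (Z1 + Z2); first exact: (subringD subG').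
rewrite mpoly_of_const_split -big_filter E2 E1 -rmorphXn big_filter.
have -> : \sum_(t <- h | t.2 != expo0 n) (t.1 *: 'X_[mon t.2]) ^+ p =
    \sum_(t <- h | t.2 != expo0 n) t.1 ^+ p *: 'X_[mon t.2 *+ p].
  by apply: eq_bigr => t _; rewrite exprZn mpolyXn.
by rewrite mulrDr; ring.
Qed.

Lemma Lfun_fexp_prime (alpha : expo n) : exists2 z, G z &
  Lfun (fexp (monomial_mul alpha h) p) =
    (mfact (mon alpha *+ p))%:R * (const_coef h ^+ p + p%:R * z).
Proof.
have subG := is_subring_gen (map fst h).
set a := (mon alpha *+ p)%MM; set w := fun m => (mffact a m)%:R : R.
have [Z GZ EZ] := mpoly_of_frobenius.
pose A := \sum_(t <- h | t.2 != expo0 n) t.1 ^+ p * (mffact a (mon t.2 *+ p) %/ p)%:R.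
exists (A + mlinform w Z).
  apply: (subringD subG); last exact: subring_mlinform.
  rewrite /A big_seq_cond; apply: subring_sum => // t /andP [ht _].
  by apply: (subringM subG); [apply/(subringX subG)/gen_subring_coef | exact: subring_nat].
rewrite Lfun_mpoly_of mpoly_of_fexp mpoly_of_monomial_mul exprMn mpolyXn.
rewrite mlinform_mfactXM EZ; congr (_ * _).
rewrite !mlinformD mlinformC mlinform_sum mffact0 mulr1 -addrA; congr (_ + _).
rewrite [p%:R * Z]mulr_natl mlinformMn mulrDr [p%:R * mlinform _ _]mulr_natl.
congr (_ + _).
rewrite /A mulr_sumr; apply: eq_bigr => t t0.
rewrite mlinformZ mlinformX mulrCA -natrM mulnC divnK //.
by apply: prime_dvd_mffact; rewrite // mon_eq0.
Qed.

End PrimePower.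

Theorem proposition4p7 (C : numClosedFieldType) (n : nat) (alpha : expo n)
  (h : fpoly C n) :
  const_coef h != 0 ->
  exists m : nat, (1 <= m)%N /\ Lfun (fexp (monomial_mul alpha h) m) != 0.
Proof.
move=> c0.
have [p p_pr not_nil] := gen_subring_not_nilpotent_mod (gen_subring_const_coef h) c0.
exists p; split; first exact: prime_gt0.
have [z Gz ->] := Lfun_fexp_prime h p_pr alpha.
rewrite mulf_neq0 //; first by rewrite pnatr_eq0 -lt0n prodn_gt0 // => i; rewrite fact_gt0.
apply/eqP => /eqP; rewrite addr_eq0 => /eqP cp; apply: not_nil.
exists p, (- z); first exact: (subringN (is_subring_gen _)).
by rewrite cp mulrN.
Qed.
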